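(* Let $f$ be a harmonic function on $K$ with $f(p_0)=\alpha$, $f(p_1)=\beta$, $f(p_2)=\gamma$, and let $g$ be its restriction to $[p_1,p_2]\cong[0,1]$. If $2\beta=\alpha+\gamma$, then the (right) derivative of $g$ at $0$ (i.e. at $p_1$) is $0$; otherwise it is infinite ($+\infty$ or $-\infty$). Similarly, if $2\gamma=\alpha+\beta$, then the (left) derivative of $g$ at $1$ (i.e. at $p_2$) is $0$; otherwise it is infinite.
   Context: Let $p_0,p_1,p_2$ be the vertices of a unit equilateral triangle in $\mathbb{R}^2$, $F_i(x)=(x+p_i)/2$, and $K$ the Sierpinski gasket (the attractor of $F_0,F_1,F_2$). Minimal triangles of the graph $G_m$ are the triangles with vertices $F_w(p_0),F_w(p_1),F_w(p_2)$ for words $w$ of length $m$. A continuous $f:K\to\mathbb{R}$ is harmonic if for every $m\ge0$ and every minimal triangle of $G_m$ with vertices $v_i,v_j,v_k$, the value at the midpoint $v_{ij}$ of $[v_i,v_j]$ is $\frac15(2f(v_i)+2f(v_j)+f(v_k))$; such $f$ is uniquely determined by its values at $p_0,p_1,p_2$. The edge $[p_1,p_2]$ is identified with $[0,1]$ via $t\mapsto p_1+t(p_2-p_1)$. *)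

From HB Require Import structures.
From mathcomp Require Import all_boot all_order all_algebra.
From mathcomp Require Import all_classical all_reals all_analysis.
Set Implicit Arguments. Unset Strict Implicit. Unset Printing Implicit Defensive.
Import Order.TTheory GRing.Theory Num.Theory.
Import numFieldNormedType.Exports.
Local Open Scope classical_set_scope.
Local Open Scope ring_scope.

Section Gasket.
Variable R : realType.
Notation pt := (R * R)%type.

Definition vtx (p0 p1 p2 : pt) (i : 'I_3) : pt :=
  if val i == 0%N then p0 else if val i == 1%N then p1 else p2.

Definition dist2 (x y : pt) : R := (x.1 - y.1) ^+ 2 + (x.2 - y.2) ^+ 2.

Definition unit_equilateral (p0 p1 p2 : pt) : Prop :=
  dist2 p0 p1 = 1 /\ dist2 p1 p2 = 1 /\ dist2 p0 p2 = 1.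

Definition Fmap (p0 p1 p2 : pt) (i : 'I_3) (x : pt) : pt :=
  ((x.1 + (vtx p0 p1 p2 i).1) / 2, (x.2 + (vtx p0 p1 p2 i).2) / 2).

Definition Fword (p0 p1 p2 : pt) (w : seq 'I_3) (x : pt) : pt :=
  foldr (Fmap p0 p1 p2) x w.

(* K is the attractor of the IFS {F_0,F_1,F_2}: the (unique, by Hutchinson)
   nonempty compact set with K = F_0(K) u F_1(K) u F_2(K). *)
Definition is_attractor (p0 p1 p2 : pt) (K : set pt) : Prop :=
  compact K /\ K !=set0 /\ K = \bigcup_(i in [set: 'I_3]) (Fmap p0 p1 p2 i @` K).

Definition midpt (x y : pt) : pt := ((x.1 + y.1) / 2, (x.2 + y.2) / 2).

(* harmonic functions on K (values outside K are irrelevant) *)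
Definition sg_harmonic (p0 p1 p2 : pt) (K : set pt) (f : pt -> R) : Prop :=
  {within K, continuous f} /\
  forall (m : nat) (w : seq 'I_3), size w = m ->
  forall i j k : 'I_3, i != j -> j != k -> i != k ->
    f (midpt (Fword p0 p1 p2 w (vtx p0 p1 p2 i)) (Fword p0 p1 p2 w (vtx p0 p1 p2 j)))
    = (2 * f (Fword p0 p1 p2 w (vtx p0 p1 p2 i))
       + 2 * f (Fword p0 p1 p2 w (vtx p0 p1 p2 j))
       + f (Fword p0 p1 p2 w (vtx p0 p1 p2 k))) / 5.

(* identification of [p1,p2] with [0,1] : t |-> p1 + t (p2 - p1) *)
Definition edge12 (p1 p2 : pt) (t : R) : pt :=
  (p1.1 + t * (p2.1 - p1.1), p1.2 + t * (p2.2 - p1.2)).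

End Gasket.

(* Let a = f(p_i) and let p_j, p_o be the other two vertices. On the corner
   cell F_i^n(K) the harmonic rule acts on the two remaining vertex values
   with eigenvalues 3/5 (on their sum minus 2a, starting at
   S = f(p_j) + f(p_o) - 2a) and 1/5 (on their difference, starting at
   D = f(p_o) - f(p_j)). A point p_i + t (p_j - p_i) with
   2^-(n+1) < t <= 2^-n lies on an edge of the subcell F_i^n F_j(K), and by
   the maximum principle (true at dyadic points by averaging, then everywhere
   by continuity, K being closed) f there is within
   |S| (3/5)^n / 5 + |D| (1/5)^n of a + 3/10 S (3/5)^n. Dividing by t ~ 2^-n,
   the difference quotient is O((2/5)^n) when S = 0, and otherwise is of
   order S (6/5)^n, which tends to +oo or -oo with the sign of S. At p_1 the
   condition S = 0 reads 2 beta = alpha + gamma; the end p_2 is the same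
   statement for the reversed edge. *)

From mathcomp Require Import all_boot all_order all_algebra.
From mathcomp Require Import all_classical all_reals all_analysis.
From mathcomp Require Import ring lra.
Import Order.TTheory GRing.Theory Num.Theory.
Import numFieldNormedType.Exports.
Local Open Scope classical_set_scope.
Local Open Scope ring_scope.

Section DyadicShells.
Context {R : realType}.

Lemma exists_div_exp2_lt (C : R) [e : R] : 0 < e -> exists n, C / 2 ^+ n < e.
Proof.
move=> e0; set n := Num.truncn (`|C| / e); exists n.
have n_lt : `|C| / e < n.+1%:R by apply: truncnS_gt.
have : (n.+1%:R : R) <= 2 ^+ n by rewrite -natrX ler_nat ltn_expl.
rewrite ltr_pdivrMr // in n_lt.
rewrite ltr_pdivrMr ?exprn_gt0 //.
have := ler_norm C; have := normr_ge0 C; nra.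
Qed.

Lemma exists_exp2_shell (t : R) : 0 < t <= 1 -> exists n, 2 ^- n.+1 < t <= 2 ^- n.
Proof.
move=> /andP[t0 t1]; have [N] := exists_div_exp2_lt 1 t0; rewrite div1r.
elim: N => [|N IH] tN; first by move: tN; rewrite expr0 invr1; lra.
by case: (lerP t (2 ^- N)) => [tN'|]; [exists N; apply/andP | exact: IH].
Qed.

Lemma near0_exp2_shell (N : nat) :
  \forall t \near (0 : R)^'+, exists2 n, (N <= n)%N & 2 ^- n.+1 < t <= 2 ^- n.
Proof.
have N0 : (0 : R) < 2 ^- N by rewrite invr_gt0 exprn_gt0.
near=> t.
have t0 : 0 < t by near: t; exact: nbhs_right_gt.
have tN : t < 2 ^- N by near: t; exact: nbhs_right_lt.
have [|n /andP[tn1 tn2]] := exists_exp2_shell t.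
  rewrite t0 /=; apply: (ltW (lt_le_trans tN _)).
  by rewrite invf_le1 ?exprn_gt0 // exprn_ege1 // ler1n.
exists n; last by apply/andP.
rewrite leqNgt; apply/negP => nN.
suff : 2 ^- N <= (2 : R) ^- n.+1 by lra.
by rewrite lef_pV2 ?posrE ?exprn_gt0 // ler_eXn2l ?ltr1n.
Unshelve. all: by end_near.
Qed.

Lemma shell_bound_cvg0 (X : R -> R) (u : nat -> R) :
  (forall n t, 2 ^- n.+1 < t <= 2 ^- n -> `|X t| <= u n) ->
  (fun n => u n * 2 ^+ n.+1) @ \oo --> 0 ->
  (fun t => X t / t) @ 0^'+ --> 0.
Proof.
move=> Xu /cvgr0Pnorm_lt u0; apply/cvgr0Pnorm_lt => e e0.
have [N _ uN] := u0 e e0.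
apply: filterS (near0_exp2_shell N) => t [n Nn tn].
have /andP[tn1 _] := tn; have X_le := Xu n t tn.
have t0 : 0 < t by apply: le_lt_trans tn1; rewrite invr_ge0 exprn_ge0.
have un0 : 0 <= u n by apply: le_trans X_le.
have inv_t : t^-1 <= 2 ^+ n.+1.
  by rewrite -[2 ^+ _]invrK lef_pV2 ?posrE ?invr_gt0 ?exprn_gt0 // ltW.
have /(le_lt_trans (ler_norm _)) ue := uN n Nn.
rewrite normrM normfV (gtr0_norm t0).
apply: le_lt_trans ue; apply: le_trans (ler_wpM2l un0 inv_t).
by apply: ler_wpM2r => //; rewrite invr_ge0 ltW.
Qed.

Lemma shell_bound_cvgy (X : R -> R) (l : nat -> R) :
  (forall n t, 2 ^- n.+1 < t <= 2 ^- n -> l n <= X t) ->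
  (fun n => l n * 2 ^+ n) @ \oo --> +oo ->
  (fun t => X t / t) @ 0^'+ --> +oo.
Proof.
move=> lX /cvgryPgt ly; apply/cvgryPgt => A.
have [N _ lN] := ly (Num.max A 0).
apply: filterS (near0_exp2_shell N) => t [n Nn tn].
have /andP[tn1 tn2] := tn; have l_le := lX n t tn.
have t0 : 0 < t by apply: le_lt_trans tn1; rewrite invr_ge0 exprn_ge0.
have := lN n Nn; rewrite /= gt_max => /andP[Al l0].
have ln0 : 0 < l n by rewrite -(pmulr_lgt0 _ (exprn_gt0 n (ltr0n R 2))).
have inv_t : 2 ^+ n <= t^-1.
  by rewrite -[2 ^+ _]invrK lef_pV2 ?posrE ?invr_gt0 ?exprn_gt0.
rewrite ltr_pdivlMr //; apply: lt_le_trans l_le.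
rewrite -ltr_pdivlMr //; apply: lt_le_trans Al _.
by apply: ler_wpM2l => //; exact: ltW.
Qed.

Lemma dyadic_split (n k : nat) : (k <= 2 ^ n.+1)%N ->
  ((k <= 2 ^ n)%N /\ k%:R / 2 ^+ n.+1 = (k%:R / 2 ^+ n) / 2 :> R) \/
  (exists2 k', (k' <= 2 ^ n)%N & k%:R / 2 ^+ n.+1 = (1 + k'%:R / 2 ^+ n) / 2 :> R).
Proof.
move=> kn; case: (leqP k (2 ^ n)) => kn'.
  by left; split => //; rewrite exprSr invfM mulrA.
right; exists (k - 2 ^ n)%N; first by rewrite leq_subLR addnn -mul2n -expnS.
rewrite natrB ?(ltnW kn') // natrX exprSr invfM mulrA mulrBl mulfV ?expf_neq0 //.
by rewrite addrC subrK.
Qed.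

Lemma dyadic_approx [s d : R] : 0 <= s <= 1 -> 0 < d ->
  exists n k, (k <= 2 ^ n)%N /\ `|s - k%:R / 2 ^+ n| < d.
Proof.
move=> /andP[s0 s1] d0; have [n dn] := exists_div_exp2_lt 1 d0.
have n0 : (0 : R) < 2 ^+ n by rewrite exprn_gt0.
have /andP[k1 k2] := truncn_itv (mulr_ge0 s0 (ltW n0)).
set k := Num.truncn _ in k1 k2; exists n, k; split.
  by rewrite -(ler_nat R) natrX (le_trans k1) // ler_piMl // ltW.
have -> : s - k%:R / 2 ^+ n = (s * 2 ^+ n - k%:R) / 2 ^+ n by field; rewrite gt_eqF.
rewrite ger0_norm ?divr_ge0 ?subr_ge0 ?exprn_ge0 //.
by apply: le_lt_trans dn; rewrite ler_pM2r ?invr_gt0 //; lra.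
Qed.

Lemma bernoulli_ineq [x : R] (n : nat) : 0 <= x -> 1 + n%:R * x <= (1 + x) ^+ n.
Proof.
move=> x0; elim: n => [|n IH]; first by rewrite mul0r addr0 expr0.
rewrite exprS -natr1.
have := ler_wpM2l (addr_ge0 ler01 x0) IH.
have : 0 <= n%:R * x ^+ 2 by rewrite mulr_ge0 // sqr_ge0.
rewrite expr2; nra.
Qed.

Lemma expr_cvgy [q : R] : 1 < q -> (fun n => q ^+ n) @ \oo --> +oo.
Proof.
move=> q1; apply/cvgryPge => A.
have /cvgryPge/(_ (A / (q - 1))) := @cvgr_idn R.
apply: filterS => n An; apply: le_trans (_ : 1 + n%:R * (q - 1) <= _).
  by rewrite ler_pdivrMr ?subr_gt0 // in An; lra.
by have := @bernoulli_ineq (q - 1) n; rewrite subrKC; apply; lra.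
Qed.

Lemma geometric_gap_cvgy (a b p q : R) : 0 < a -> 1 < q -> `|p| <= 1 ->
  (fun n => a * q ^+ n - b * p ^+ n) @ \oo --> +oo.
Proof.
move=> a0 q1 p1; apply/cvgryPge => A.
have /cvgryPge/(_ ((A + `|b|) / a)) := expr_cvgy q1.
apply: filterS => n qn; rewrite ler_pdivrMr // mulrC in qn.
have : b * p ^+ n <= `|b|.
  apply: le_trans (ler_norm _) _; rewrite normrM normrX.
  by rewrite ler_piMr ?exprn_ile1.
lra.
Qed.

Lemma cvg_one_sub_at_left : (fun t : R => 1 - t) @ 1^'- --> 0^'+.
Proof.
move=> P [e /= e0 HP]; exists e => // t /= t1 tlt1; apply: HP.
  by move: t1; rewrite /ball /= sub0r normrN distrC.
by rewrite /= subr_gt0.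
Qed.

Lemma cvg_at_left_one_sub (h : R -> R) (G : set_system R) {FG : Filter G} :
  h @ 0^'+ --> G -> (fun t => h (1 - t)) @ 1^'- --> G.
Proof. by move=> hG; apply: cvg_comp cvg_one_sub_at_left hG. Qed.

End DyadicShells.

Lemma closed_ball_approx {R : realType} {T : pseudoMetricType R} [K : set T] [x : T] :
  closed K -> (forall e : R, 0 < e -> exists2 y, K y & ball x e y) -> K x.
Proof.
move=> K_closed approx; apply: K_closed => B /nbhs_ballP[e e0 eB].
by have [y Ky xy] := approx e e0; exists y; split => //; apply: eB.
Qed.

Lemma within_continuous_ball {R : realType} {T : pseudoMetricType R} [K : set T]
    [f : T -> R] [x : T] :
  {within K, continuous f} -> K x -> forall e, 0 < e ->
  exists2 d, 0 < d & forall y, K y -> ball x d y -> `|f x - f y| < e.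
Proof.
move=> /subspace_continuousP fc Kx e e0.
have /cvgrPdist_lt/(_ e e0) := fc x Kx.
by rewrite /within /= => /nbhs_ballP[d d0 fd]; exists d => // y Ky xy; apply: fd.
Qed.

Lemma ord3_third [u l : 'I_3] : u != l -> exists o : 'I_3, (l != o) && (u != o).
Proof.
by case: u l => [[|[|[|//]]] ?] [[|[|[|//]]] ?] //= _;
  [exists (@Ordinal 3 2 isT) | exists (@Ordinal 3 1 isT) | exists (@Ordinal 3 2 isT)
  | exists (@Ordinal 3 0 isT) | exists (@Ordinal 3 1 isT) | exists (@Ordinal 3 0 isT)].
Qed.

Lemma ord3_cases [i j o : 'I_3] : i != j -> j != o -> i != o ->
  forall u : 'I_3, [|| u == i, u == j | u == o].
Proof.
by case: i j o => [[|[|[|//]]] ?] [[|[|[|//]]] ?] [[|[|[|//]]] ?] //= _ _ _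
  [[|[|[|//]]] ?].
Qed.

Lemma avg_in_itv (R : realFieldType) (lo hi a b c : R) :
  a \in `[lo, hi] -> b \in `[lo, hi] -> c \in `[lo, hi] ->
  (2 * a + 2 * b + c) / 5 \in `[lo, hi].
Proof.
by rewrite !in_itv /= => /andP[? ?] /andP[? ?] /andP[? ?]; apply/andP; split; lra.
Qed.

Lemma nseqS_rcons (T : Type) (n : nat) (x : T) : nseq n.+1 x = rcons (nseq n x) x.
Proof. by elim: n => //= n <-. Qed.

Section Gasket.
Context {R : realType}.
Variables (p0 p1 p2 : R * R).
Local Notation P := (vtx p0 p1 p2).
Local Notation F := (Fmap p0 p1 p2).
Local Notation Fw := (Fword p0 p1 p2).

Lemma ball_pairE (x y : R * R) e :
  ball x e y <-> `|x.1 - y.1| < e /\ `|x.2 - y.2| < e.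
Proof. by []. Qed.

Lemma midpt_id (x : R * R) : midpt x x = x.
Proof. by case: x => a b; rewrite /midpt /=; congr pair; field. Qed.

Lemma Fword_rcons w l x : Fw (rcons w l) x = Fw w (F l x).
Proof. by rewrite /Fword foldr_rcons. Qed.

Lemma Fword_midpt w a b : Fw w (midpt a b) = midpt (Fw w a) (Fw w b).
Proof.
by elim: w => //= l w ->; rewrite /Fmap /midpt /=; congr pair; field.
Qed.

Lemma edge12_0 (a b : R * R) : edge12 a b 0 = a.
Proof. by case: a => a1 a2; rewrite /edge12 !mul0r !addr0. Qed.

Lemma edge12_1 (a b : R * R) : edge12 a b 1 = b.
Proof. by case: a b => a1 a2 [b1 b2]; rewrite /edge12 /=; congr pair; ring. Qed.

Lemma edge12_sym (a b : R * R) t : edge12 a b t = edge12 b a (1 - t).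
Proof. by rewrite /edge12; congr pair; ring. Qed.

Lemma Fmap_edge_left l b s : F l (edge12 (P l) b s) = edge12 (P l) b (s / 2).
Proof. by rewrite /Fmap /edge12 /=; congr pair; field. Qed.

Lemma Fmap_edge_right l a s : F l (edge12 a (P l) s) = edge12 a (P l) ((1 + s) / 2).
Proof. by rewrite /Fmap /edge12 /=; congr pair; field. Qed.

Lemma Fword_nseq_edge l b n s :
  Fw (nseq n l) (edge12 (P l) b s) = edge12 (P l) b (s / 2 ^+ n).
Proof.
elim: n => [|n /= ->]; first by rewrite expr0 divr1.
by rewrite Fmap_edge_left exprS invfM mulrA mulrAC.
Qed.

Lemma Fword_ball w (a b : R * R) e : ball a e b -> ball (Fw w a) e (Fw w b).
Proof.
elim: w => //= l w IH /IH [/= b1 b2]; apply/ball_pairE.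
have half (x y z : R) : `|x - y| < e -> `|(x + z) / 2 - (y + z) / 2| < e.
  move=> xy; have -> : (x + z) / 2 - (y + z) / 2 = (x - y) / 2 by ring.
  rewrite normrM [`|_^-1|]ger0_norm ?invr_ge0 //.
  by apply: le_lt_trans xy; rewrite ler_piMr ?invf_le1 ?ler1n.
by split; apply: half.
Qed.

Lemma edge12_near (a b : R * R) s [e : R] : 0 < e ->
  exists2 d, 0 < d & forall s', `|s - s'| < d -> ball (edge12 a b s) e (edge12 a b s').
Proof.
set Q := `|b.1 - a.1| + `|b.2 - a.2| + 1.
have c1 := normr_ge0 (b.1 - a.1); have c2 := normr_ge0 (b.2 - a.2).
have Q0 : 0 < Q by rewrite /Q; lra.
move=> e0; exists (e / Q) => [|s' ss']; first by rewrite divr_gt0.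
rewrite ltr_pdivlMr // in ss'.
have coord x c : `|c| <= Q -> `|x + s * c - (x + s' * c)| < e.
  move=> cQ; have -> : x + s * c - (x + s' * c) = (s - s') * c by ring.
  by rewrite normrM; apply: le_lt_trans ss'; rewrite ler_wpM2l.
by split; apply: coord; rewrite /Q; lra.
Qed.

Lemma edge12_dyadic_near (a b : R * R) [s e : R] : 0 <= s <= 1 -> 0 < e ->
  exists n k, (k <= 2 ^ n)%N /\ ball (edge12 a b s) e (edge12 a b (k%:R / 2 ^+ n)).
Proof.
move=> s01 e0; have [d d0 near_s] := edge12_near a b s e0.
have [n [k [kn sk]]] := dyadic_approx s01 d0.
by exists n, k; split => //; apply: near_s.
Qed.

Section Attractor.
Variable K : set (R * R).
Hypotheses (K_closed : closed K) (K_Fmap : forall l y, K y -> K (Fmap p0 p1 p2 l y)).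
Variable x0 : R * R.
Hypothesis K_x0 : K x0.

Lemma attractor_Fword w y : K y -> K (Fw w y).
Proof. by move=> Ky; elim: w => //= l w; apply: K_Fmap. Qed.

Lemma attractor_vtx l : K (P l).
Proof.
apply: closed_ball_approx => // e e0.
have [d d0 near0] := edge12_near (P l) x0 0 e0.
have [n dn] := exists_div_exp2_lt 1 d0.
exists (Fw (nseq n l) x0); first exact: attractor_Fword.
have -> : Fw (nseq n l) x0 = edge12 (P l) x0 (1 / 2 ^+ n).
  by rewrite -Fword_nseq_edge edge12_1.
rewrite -{1}(edge12_0 (P l) x0); apply: near0.
by rewrite sub0r normrN ger0_norm ?divr_ge0 ?exprn_ge0.
Qed.

Lemma attractor_dyadic_edge i j n k : (k <= 2 ^ n)%N ->
  K (edge12 (P i) (P j) (k%:R / 2 ^+ n)).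
Proof.
elim: n k => [|n IH] k.
  rewrite expn0 expr0 divr1; case: k => [|[|//]] _.
    by rewrite edge12_0; apply: attractor_vtx.
  by rewrite edge12_1; apply: attractor_vtx.
case/(dyadic_split (R := R)) => [[kn ->]|[k' kn ->]].
  by rewrite -Fmap_edge_left; apply/K_Fmap/IH.
by rewrite -Fmap_edge_right; apply/K_Fmap/IH.
Qed.

Lemma attractor_edge i j s : 0 <= s <= 1 -> K (edge12 (P i) (P j) s).
Proof.
move=> s01; apply: closed_ball_approx => // e e0.
have [n [k [kn near_s]]] := edge12_dyadic_near (P i) (P j) s01 e0.
by exists (edge12 (P i) (P j) (k%:R / 2 ^+ n)); first exact: attractor_dyadic_edge.
Qed.

Section Harmonic.
Variable f : R * R -> R.
Hypothesis f_midpt : forall w u v o, u != v -> v != o -> u != o ->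
  f (midpt (Fw w (P u)) (Fw w (P v))) =
  (2 * f (Fw w (P u)) + 2 * f (Fw w (P v)) + f (Fw w (P o))) / 5.

Definition vertex_val w u := f (Fw w (P u)).

Lemma vertex_val_rcons w l u o : u != l -> l != o -> u != o ->
  vertex_val (rcons w l) u =
  (2 * vertex_val w u + 2 * vertex_val w l + vertex_val w o) / 5.
Proof.
by move=> ul lo uo; rewrite /vertex_val Fword_rcons Fword_midpt (f_midpt _ _ _ _ ul lo uo).
Qed.

Lemma vertex_val_rcons_id w l : vertex_val (rcons w l) l = vertex_val w l.
Proof.
rewrite /vertex_val Fword_rcons.
have -> : Fmap p0 p1 p2 l (P l) = midpt (P l) (P l) by [].
by rewrite midpt_id.
Qed.

Definition cell_in_itv w (lo hi : R) := forall u, vertex_val w u \in `[lo, hi].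

Lemma cell_in_itv_rcons w l lo hi : cell_in_itv w lo hi -> cell_in_itv (rcons w l) lo hi.
Proof.
move=> w_itv u; have [->|ul] := eqVneq u l; first by rewrite vertex_val_rcons_id.
have [m /andP[lm um]] := ord3_third ul.
by rewrite (vertex_val_rcons _ _ _ _ ul lm um); apply: avg_in_itv.
Qed.

Lemma dyadic_edge_in_itv i j n k w lo hi : (k <= 2 ^ n)%N -> cell_in_itv w lo hi ->
  f (Fw w (edge12 (P i) (P j) (k%:R / 2 ^+ n))) \in `[lo, hi].
Proof.
elim: n k w => [|n IH] k w.
  rewrite expn0 expr0 divr1; case: k => [|[|//]] _ w_itv.
    by rewrite edge12_0; apply: w_itv.
  by rewrite edge12_1; apply: w_itv.
case/(dyadic_split (R := R)) => [[kn ->]|[k' kn ->]] w_itv.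
  by rewrite -Fmap_edge_left -Fword_rcons; apply/IH/cell_in_itv_rcons.
by rewrite -Fmap_edge_right -Fword_rcons; apply/IH/cell_in_itv_rcons.
Qed.

Hypothesis f_cont : {within K, continuous f}.

Lemma edge_in_itv i j w s lo hi : 0 <= s <= 1 -> cell_in_itv w lo hi ->
  f (Fw w (edge12 (P i) (P j) s)) \in `[lo, hi].
Proof.
move=> s01 w_itv; set x := Fw w _.
have Kx : K x by apply/attractor_Fword/attractor_edge.
have approx e : 0 < e -> exists2 y, y \in `[lo, hi] & `|f x - y| < e.
  move=> e0; have [d d0 fd] := within_continuous_ball f_cont Kx e e0.
  have [n [k [kn near_s]]] := edge12_dyadic_near (P i) (P j) s01 d0.
  exists (f (Fw w (edge12 (P i) (P j) (k%:R / 2 ^+ n)))).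
    exact: dyadic_edge_in_itv.
  apply: fd; last exact: Fword_ball.
  by apply/attractor_Fword/attractor_dyadic_edge.
rewrite in_itv /=; apply/andP; split; apply/ler_addgt0Pr => e e0;
  have [y] := approx e e0; rewrite in_itv /= => /andP[? ?] /ltW; rewrite ler_distl; lra.
Qed.

Definition edge_slope i j t := (f (edge12 (P i) (P j) t) - f (P i)) / t.

Section Corner.
Variables i j o : 'I_3.
Hypotheses (ij : i != j) (jo : j != o) (io : i != o).

Definition corner_sum := f (P j) + f (P o) - 2 * f (P i).
Definition corner_diff := f (P o) - f (P j).

Lemma vertex_val_nseq_id n : vertex_val (nseq n i) i = f (P i).
Proof. by elim: n => // n IH; rewrite nseqS_rcons vertex_val_rcons_id. Qed.

Lemma corner_vertex_vals n :
  vertex_val (nseq n i) o + vertex_val (nseq n i) j - 2 * f (P i) =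
    corner_sum * (3 / 5) ^+ n /\
  vertex_val (nseq n i) o - vertex_val (nseq n i) j = corner_diff * (1 / 5) ^+ n.
Proof.
elim: n => [|n [IHs IHd]].
  by rewrite !expr0 !mulr1 /corner_sum /corner_diff /vertex_val /=; split; ring.
have ji : j != i by rewrite eq_sym.
have oi : o != i by rewrite eq_sym.
have oj : o != j by rewrite eq_sym.
move: IHs IHd; rewrite nseqS_rcons (vertex_val_rcons _ _ _ _ oi ij oj).
rewrite (vertex_val_rcons _ _ _ _ ji io jo) vertex_val_nseq_id.
set A := vertex_val _ o; set B := vertex_val _ j => IHs IHd.
by rewrite !exprS (mulrCA corner_sum) (mulrCA corner_diff) -IHs -IHd; split; field.
Qed.

Lemma edge_shell_cell n t : 2 ^- n.+1 < t <= 2 ^- n ->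
  exists2 s, 0 <= s <= 1 &
    edge12 (P i) (P j) t = Fw (rcons (nseq n i) j) (edge12 (P i) (P j) s).
Proof.
move=> /andP[/ltW tn1 tn2]; have n0 : (0 : R) < 2 ^+ n by rewrite exprn_gt0.
have lo : 1 <= t * 2 ^+ n.+1 by rewrite -ler_pdivrMr ?exprn_gt0 // div1r.
have hi : t * 2 ^+ n <= 1 by rewrite -ler_pdivlMr // div1r.
exists (t * 2 ^+ n.+1 - 1); first by rewrite exprS mulrCA in lo *; apply/andP; lra.
rewrite Fword_rcons Fmap_edge_right Fword_nseq_edge; congr edge12.
by rewrite exprS; field; rewrite gt_eqF.
Qed.

Lemma edge_shell_bound n t : 2 ^- n.+1 < t <= 2 ^- n ->
  `|f (edge12 (P i) (P j) t) - f (P i) - 3 / 10 * (corner_sum * (3 / 5) ^+ n)| <=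
  `|corner_sum * (3 / 5) ^+ n| / 5 + `|corner_diff * (1 / 5) ^+ n|.
Proof.
move=> /edge_shell_cell[s s01 ->].
have [hs hd] := corner_vertex_vals n.
set U := corner_sum * _ in hs *; set V := corner_diff * _ in hd *.
set c := f (P i) + 3 / 10 * U; set r := `|U| / 5 + `|V|.
have := ler_norm U; have := ler_norm (- U); have := ler_norm V; have := ler_norm (- V).
rewrite !normrN => NV V_le NU U_le.
rewrite -addrA -opprD ler_distl -[_ <= _ <= _]/(_ \in `[c - r, c + r]).
have ji : j != i by rewrite eq_sym.
have oi : o != i by rewrite eq_sym.
have oj : o != j by rewrite eq_sym.
apply: edge_in_itv => // u; rewrite in_itv /= /c /r.
case/or3P: (ord3_cases ij jo io u) => /eqP ->.
- rewrite (vertex_val_rcons _ _ _ _ ij jo io) vertex_val_nseq_id; lra.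
- rewrite vertex_val_rcons_id; lra.
- rewrite (vertex_val_rcons _ _ _ _ oj ji oi) vertex_val_nseq_id; lra.
Qed.

Lemma corner_gap_cvgy : corner_sum != 0 ->
  (fun n => (`|corner_sum * (3 / 5) ^+ n| / 10 - `|corner_diff * (1 / 5) ^+ n|) * 2 ^+ n)
    @ \oo --> +oo.
Proof.
move=> S0; have -> : (fun n => (`|corner_sum * (3 / 5) ^+ n| / 10
    - `|corner_diff * (1 / 5) ^+ n|) * 2 ^+ n) =
    (fun n => `|corner_sum| / 10 * (6 / 5) ^+ n - `|corner_diff| * (2 / 5) ^+ n).
  apply/funext => n; rewrite !normrM !normrX !(@ger0_norm _ (_ / 5)) //.
  have e6 : (3 / 5 : R) ^+ n * 2 ^+ n = (6 / 5) ^+ n.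
    by rewrite -exprMn; congr (_ ^+ _); field.
  have e2 : (1 / 5 : R) ^+ n * 2 ^+ n = (2 / 5) ^+ n.
    by rewrite -exprMn; congr (_ ^+ _); field.
  by rewrite -e6 -e2; ring.
by apply: geometric_gap_cvgy; rewrite ?divr_gt0 ?normr_gt0 ?ger0_norm //; lra.
Qed.

Lemma edge_slope_cvg0 : corner_sum = 0 -> edge_slope i j @ 0^'+ --> 0.
Proof.
move=> S0; apply: (@shell_bound_cvg0 _ _ (fun n => `|corner_diff| * (1 / 5) ^+ n)).
  move=> n t /edge_shell_bound.
  by rewrite S0 !mul0r normr0 mul0r mulr0 subr0 add0r normrM normrX (@ger0_norm _ (1 / 5)).
rewrite /=; have -> : (fun n => `|corner_diff| * (1 / 5) ^+ n * 2 ^+ n.+1) =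
    (fun n => 2 * `|corner_diff| * (2 / 5) ^+ n).
  apply/funext => n; have e2 : (1 / 5 : R) ^+ n * 2 ^+ n = (2 / 5) ^+ n.
    by rewrite -exprMn; congr (_ ^+ _); field.
  by rewrite exprSr -e2; ring.
by rewrite -(mulr0 (2 * `|corner_diff|)); apply: cvgM; [exact: cvg_cst | apply: cvg_expr;
  rewrite ger0_norm; lra].
Qed.

Lemma edge_slope_cvgy : 0 < corner_sum -> edge_slope i j @ 0^'+ --> +oo.
Proof.
move=> S0; apply: (@shell_bound_cvgy _ _ (fun n =>
  `|corner_sum * (3 / 5) ^+ n| / 10 - `|corner_diff * (1 / 5) ^+ n|)).
  move=> n t /edge_shell_bound.
  have U0 : 0 < corner_sum * (3 / 5) ^+ n by rewrite mulr_gt0 ?exprn_gt0.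
  by rewrite (gtr0_norm U0) ler_norml => /andP[? _]; lra.
by apply: corner_gap_cvgy; rewrite gt_eqF.
Qed.

Lemma edge_slope_cvgNy : corner_sum < 0 -> edge_slope i j @ 0^'+ --> -oo.
Proof.
move=> S0; apply/cvgNry.
have -> : - edge_slope i j = (fun t => - (f (edge12 (P i) (P j) t) - f (P i)) / t).
  by apply/funext => t /=; rewrite /edge_slope mulNr.
apply: (@shell_bound_cvgy _ _ (fun n =>
  `|corner_sum * (3 / 5) ^+ n| / 10 - `|corner_diff * (1 / 5) ^+ n|)).
  move=> n t /edge_shell_bound.
  have U0 : corner_sum * (3 / 5) ^+ n < 0 by rewrite pmulr_llt0 ?exprn_gt0.
  by rewrite (ltr0_norm U0) ler_norml => /andP[_ ?]; lra.
by apply: corner_gap_cvgy; rewrite lt_eqF.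
Qed.

Lemma edge_slope_cvg_infty : corner_sum != 0 ->
  edge_slope i j @ 0^'+ --> +oo \/ edge_slope i j @ 0^'+ --> -oo.
Proof.
case: ltgtP => // S _; [right; exact: edge_slope_cvgNy | left; exact: edge_slope_cvgy].
Qed.

End Corner.
End Harmonic.
End Attractor.
End Gasket.

Theorem lemma5 (R : realType) (p0 p1 p2 : R * R) (K : set (R * R))
  (f : R * R -> R) (alpha beta gamma : R) :
  unit_equilateral p0 p1 p2 ->
  is_attractor p0 p1 p2 K ->
  sg_harmonic p0 p1 p2 K f ->
  f p0 = alpha -> f p1 = beta -> f p2 = gamma ->
  let g := fun t : R => f (edge12 p1 p2 t) in
  (2 * beta = alpha + gamma ->
     (fun t => (g t - g 0) / t) @ 0^'+ --> 0) /\
  (2 * beta != alpha + gamma ->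
     (fun t => (g t - g 0) / t) @ 0^'+ --> +oo \/
     (fun t => (g t - g 0) / t) @ 0^'+ --> -oo) /\
  (2 * gamma = alpha + beta ->
     (fun t => (g t - g 1) / (t - 1)) @ 1^'- --> 0) /\
  (2 * gamma != alpha + beta ->
     (fun t => (g t - g 1) / (t - 1)) @ 1^'- --> +oo \/
     (fun t => (g t - g 1) / (t - 1)) @ 1^'- --> -oo).
Proof.
move=> _ [K_compact [[x0 K_x0] K_eq]] [f_cont f_harm] <- <- <- g.
have K_closed : closed K by apply: compact_closed => //; exact: norm_hausdorff.
have K_Fmap l y : K y -> K (Fmap p0 p1 p2 l y).
  by move=> Ky; rewrite K_eq; exists l => //; exists y.
have f_midpt w := f_harm (size w) w erefl.
have slope0 := edge_slope_cvg0 _ _ _ _ K_closed K_Fmap _ K_x0 _ f_midpt f_cont.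
have slope_infty := edge_slope_cvg_infty _ _ _ _ K_closed K_Fmap _ K_x0 _ f_midpt f_cont.
pose i0 := @Ordinal 3 0 isT; pose i1 := @Ordinal 3 1 isT; pose i2 := @Ordinal 3 2 isT.
have -> : (fun t => (g t - g 0) / t) = edge_slope p0 p1 p2 f i1 i2 by rewrite /g edge12_0.
have -> : (fun t => (g t - g 1) / (t - 1)) =
    (fun t => (- edge_slope p0 p1 p2 f i2 i1) (1 - t)).
  apply/funext => t; rewrite /g /edge_slope /= edge12_1 (edge12_sym p1).
  by rewrite -(opprB 1 t) invrN mulrN.
have S12 : corner_sum p0 p1 p2 f i1 i2 i0 = f p2 + f p0 - 2 * f p1 by [].
have S21 : corner_sum p0 p1 p2 f i2 i1 i0 = f p1 + f p0 - 2 * f p2 by [].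
split; [|split; [|split]] => hS.
- by apply: (slope0 i1 i2 i0) => //; rewrite S12; lra.
- by apply: (slope_infty i1 i2 i0) => //; rewrite S12; apply: contra_neq hS; lra.
- have k0 : edge_slope p0 p1 p2 f i2 i1 @ 0^'+ --> 0.
    by apply: (slope0 i2 i1 i0) => //; rewrite S21; lra.
  have Nk0 : (- edge_slope p0 p1 p2 f i2 i1) @ 0^'+ --> 0.
    by rewrite -{2}oppr0; apply: cvgN.
  exact: cvg_at_left_one_sub.
- have S : corner_sum p0 p1 p2 f i2 i1 i0 != 0.
    by rewrite S21; apply: contra_neq hS; lra.
  case: (slope_infty i2 i1 i0) => // [/cvgNrNy|/cvgNry] slope;
    [right | left]; exact: cvg_at_left_one_sub.
Qed.
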